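(* Let $G=\langle a,t\mid ta^2t^{-1}=a^3\rangle$ be the Baumslag--Solitar group $BS(2,3)$ with generating set $\{a,t\}$. Then the growth rate of $G$ is bounded below by $\frac{1+\sqrt{13}}{2}$.
   Context: For a group $G$ generated by a finite set $S$, let $\gamma(n)=\#\{x\in G:\|x\|_S\leq n\}$, where $\|\cdot\|_S$ is the word length with respect to $S\cup S^{-1}$. The growth rate of $G$ with respect to $S$ is $\lim_{n\to\infty}\gamma(n)^{1/n}$. *)

From HB Require Import structures.
From mathcomp Require Import all_boot all_order all_algebra.
From mathcomp Require Import all_classical all_reals all_analysis.
Set Implicit Arguments. Unset Strict Implicit. Unset Printing Implicit Defensive.
Import Order.TTheory GRing.Theory Num.Theory.

(* A letter is a pair (is_t, inverted):
   (false,false) = a, (false,true) = a^-1, (true,false) = t, (true,true) = t^-1.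
   Words are finite sequences of letters (words over S u S^-1, S = {a,t}). *)
Definition letter := (bool * bool)%type.
Definition word := seq letter.
Definition inv_letter (x : letter) : letter := (x.1, ~~ x.2).
Definition bs_a : letter := (false, false).
Definition bs_t : letter := (true, false).

Definition bs_relator : word :=
  [:: bs_t; bs_a; bs_a; inv_letter bs_t;
      inv_letter bs_a; inv_letter bs_a; inv_letter bs_a].

(* Two words represent the same element of G iff they are related by the
   congruence generated by free cancellation x x^-1 = 1 and the relator = 1.
   The elements of G are exactly the classes of this equivalence. *)
Inductive bs_equiv : word -> word -> Prop :=
| bs_refl w : bs_equiv w w
| bs_sym u v : bs_equiv u v -> bs_equiv v u
| bs_trans u v w : bs_equiv u v -> bs_equiv v w -> bs_equiv u w
| bs_free u x v : bs_equiv (u ++ x :: inv_letter x :: v) (u ++ v)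
| bs_rel u v : bs_equiv (u ++ bs_relator ++ v) (u ++ v).

(* A list s "covers the ball of radius n" if it consists of
   words of length <= n and every word of length <= n is equivalent to one
   in s.  The minimal size of such a list is the number of equivalence
   classes of words of length <= n, i.e. gamma(n) = #{x in G : |x|_S <= n}. *)
Definition covers_ball (n : nat) (s : seq word) : Prop :=
  (forall w, w \in s -> size w <= n) /\
  (forall w, size w <= n -> exists2 w', w' \in s & bs_equiv w w').

Fixpoint all_words (n : nat) : seq word :=
  if n is m.+1 then [::] :: [seq x :: w | x <- enum {: letter}, w <- all_words m]
  else [:: [::]].

Lemma all_wordsP n w : size w <= n -> w \in all_words n.
Proof.
elim: n w => [|n IH] w.
- by case: w => [|x w] //= _; rewrite inE.
- case: w => [|x w] /=; first by rewrite inE eqxx.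
  rewrite ltnS => /IH Hw; rewrite in_cons; apply/orP; right.
  by apply/allpairsPdep; exists x, w; rewrite mem_enum.
Qed.

Lemma cover_exists n :
  exists k, `[< exists s, size s = k /\ covers_ball n s >].
Proof.
exists (size [seq w <- all_words n | size w <= n]); apply/asboolP.
exists [seq w <- all_words n | size w <= n]; split => //; split.
- by move=> w; rewrite mem_filter => /andP[].
- move=> w Hw; exists w; last exact: bs_refl.
  by rewrite mem_filter Hw all_wordsP.
Qed.

Definition bs_gamma (n : nat) : nat := ex_minn (cover_exists n).

(* BS(2,3) acts on Britton normal forms by left multiplication followed by
   renormalisation, and equivalent words act identically, so distinct reduced
   normal forms are distinct group elements.  Normal forms obtained by prefixing
   one of the syllables t a, t^-1 a, t^-1 a^-1 (length 2) or by repeating the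
   leading letter t^(+-1) (length 1) are counted by f(n+2) = f(n+1) + 3 f(n),
   hence gamma(n) >= lambda^(n-2) where lambda^2 = lambda + 3.  The limit exists
   by Fekete's lemma, ln gamma being subadditive. *)

From HB Require Import structures.
From mathcomp Require Import all_boot all_order all_algebra.
From mathcomp Require Import all_classical all_reals all_analysis.
From mathcomp Require Import zify lra.
Import Order.TTheory GRing.Theory Num.Theory.
Import numFieldNormedType.Exports.
Local Open Scope classical_set_scope.
Local Open Scope ring_scope.

(* The state (m, [:: (e1, r1); ...; (ek, rk)]) stands for the normal form
   a^m t^(+-1) a^r1 ... t^(+-1) a^rk, where t^(+-1) is t^-1 iff ei; ri is a
   representative of the right cosets of <a^2> (after t) or <a^3> (after t^-1),
   and [reduced] also excludes the pinches t^(+-1) a^0 t^(-+1). *)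
Definition syllable := (bool * int)%type.
Definition nf_state := (int * seq syllable)%type.

Definition tbase (e : bool) : int := if e then 3 else 2.

Definition coset_rep (e : bool) (r : int) : bool :=
  if e then -1 <= r <= 1 else 0 <= r <= 1.

Fixpoint reduced (bs : seq syllable) : bool :=
  if bs is (e, r) :: bs' then
    [&& coset_rep e r, (if bs' is (e', _) :: _ then (r != 0) || (e' == e) else true)
      & reduced bs']
  else true.

(* Normal form of t^(+-1) a^(q * tbase e + r) bs, using
   t^(+-1) a^(q * tbase e) = a^(q * tbase (~~ e)) t^(+-1). *)
Definition mul_tpow (e : bool) (q r : int) (bs : seq syllable) : nf_state :=
  if bs is (e', r') :: rest then
    if (e' == ~~ e) && (r == 0) then (q * tbase (~~ e) + r', rest)
    else (q * tbase (~~ e), (e, r) :: bs)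
  else (q * tbase (~~ e), [:: (e, r)]).

Definition act_tpow (e : bool) (s : nf_state) : nf_state :=
  let q := ((s.1 + (if e then 1 else 0)) %/ tbase e)%Z in
  mul_tpow e q (s.1 - q * tbase e) s.2.
Arguments act_tpow : simpl never.

Definition act_letter (x : letter) (s : nf_state) : nf_state :=
  match x with
  | (false, false) => (s.1 + 1, s.2)
  | (false, true) => (s.1 - 1, s.2)
  | (true, e) => act_tpow e s
  end.

Definition act_word (w : word) (s : nf_state) : nf_state := foldr act_letter s w.

Lemma act_word_cat u v s : act_word (u ++ v) s = act_word u (act_word v s).
Proof. exact: foldr_cat. Qed.

Lemma coset_decomp e (m : int) : exists q r, m = q * tbase e + r /\ coset_rep e r.
Proof.
exists ((m + (if e then 1 else 0)) %/ tbase e)%Z.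
exists (m - ((m + (if e then 1 else 0)) %/ tbase e)%Z * tbase e).
by case: e; rewrite /tbase /coset_rep; (split; [lia | apply/andP; lia]).
Qed.

Lemma act_tpow_eq e q r bs :
  coset_rep e r -> act_tpow e (q * tbase e + r, bs) = mul_tpow e q r bs.
Proof.
move=> er; rewrite /act_tpow /=.
have -> : ((q * tbase e + r + (if e then 1 else 0)) %/ tbase e)%Z = q.
  by case: e er; rewrite /coset_rep /tbase => /andP[]; lia.
by rewrite addrC addKr.
Qed.

Lemma reduced_mul_tpow e q r bs :
  coset_rep e r -> reduced bs -> reduced (mul_tpow e q r bs).2.
Proof.
case: bs => [|[e' r'] rest] /= er; first by rewrite er.
case/and3P=> e'r' head_ok red_rest.
case: ifP => [_ | /negbT]; first exact: red_rest.
rewrite negb_and => no_pop /=; rewrite er e'r' head_ok red_rest !andbT /=.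
by move: no_pop; rewrite orbC; case: (r != 0) => //=; case: (e'); case: (e).
Qed.

Lemma reduced_act_tpow e s : reduced s.2 -> reduced (act_tpow e s).2.
Proof.
case: s => m bs /=; have [q [r [-> er]]] := coset_decomp e m.
by rewrite act_tpow_eq //; apply: reduced_mul_tpow.
Qed.

Lemma mul_tpow_push e q r bs :
  reduced ((e, r) :: bs) -> mul_tpow e q r bs = (q * tbase (~~ e), (e, r) :: bs).
Proof.
case: bs => [|[e' r'] rest] //= /and3P[_ head_ok _].
by case: ifP => // /andP[/eqP e'E /eqP r0]; move: head_ok; rewrite r0 e'E /=; case: (e).
Qed.

Lemma act_tpow_mul_tpow e q r bs : coset_rep e r -> reduced bs ->
  act_tpow (~~ e) (mul_tpow e q r bs) = (q * tbase e + r, bs).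
Proof.
have coset_rep0 e' : coset_rep e' 0 by case: e'.
have push s : act_tpow (~~ e) (q * tbase (~~ e), (e, r) :: s) = (q * tbase e + r, s).
  by rewrite -[q * _]addr0 act_tpow_eq //= negbK eqxx eqxx.
case: bs => [|[e' r'] rest] er red_bs; rewrite {1}/mul_tpow; first exact: push.
case: ifP => [/andP[/eqP e'E /eqP r0] | _]; last exact: push.
subst e' r; have /and3P[e'r' _ _] := red_bs.
by rewrite addr0 act_tpow_eq // mul_tpow_push // negbK.
Qed.

Lemma act_tpowK e s : reduced s.2 -> act_tpow (~~ e) (act_tpow e s) = s.
Proof.
case: s => m bs /= red_bs; have [q [r [-> er]]] := coset_decomp e m.
by rewrite act_tpow_eq // act_tpow_mul_tpow.
Qed.

Lemma mul_tpowS e q r bs :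
  mul_tpow e (q + 1) r bs =
  ((mul_tpow e q r bs).1 + tbase (~~ e), (mul_tpow e q r bs).2).
Proof.
rewrite /mul_tpow mulrDl mul1r.
by case: bs => [|[e' r'] rest] //; case: ifP => //= _; rewrite addrAC.
Qed.

Lemma act_relator s : reduced s.2 -> act_word bs_relator s = s.
Proof.
case: s => m bs /= red_bs; have [q [r [-> er]]] := coset_decomp true m.
have shift := mul_tpowS true (q - 1) r bs; rewrite subrK in shift.
have -> : q * tbase true + r - 1 - 1 - 1 = (q - 1) * tbase true + r.
  by rewrite /tbase; lia.
rewrite act_tpow_eq // -addrA -[1 + 1]/(tbase (~~ true)) -shift.
exact: act_tpow_mul_tpow.
Qed.

Lemma reduced_act_word w s : reduced s.2 -> reduced (act_word w s).2.
Proof.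
move=> red_s; elim: w => [|[[] e] w IH] //; first exact: reduced_act_tpow.
by case: e.
Qed.

Lemma act_word_equiv u v s :
  reduced s.2 -> bs_equiv u v -> act_word u s = act_word v s.
Proof.
move=> red_s; elim=> {u v} // [u v w _ -> _ -> // | u x v | u v].
- rewrite !act_word_cat /=; have red_v := reduced_act_word v _ red_s.
  case: x => [[] e] /=; first by rewrite -{1}[e]negbK act_tpowK.
  by case: e; rewrite ?subrK ?addrK -surjective_pairing.
- by rewrite !act_word_cat act_relator //; apply: reduced_act_word.
Qed.

Definition a_pow (r : int) : word :=
  if r == 1 then [:: bs_a] else if r == -1 then [:: inv_letter bs_a] else [::].

Lemma act_a_pow r s : -1 <= r <= 1 -> act_word (a_pow r) s = (s.1 + r, s.2).
Proof.
move=> /andP[r_ge r_le]; rewrite /a_pow.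
case: eqP => [-> // | r_ne1]; case: eqP => [-> // | r_neN1].
have -> : r = 0 by lia.
by rewrite addr0 -surjective_pairing.
Qed.

Lemma coset_rep_bound e r : coset_rep e r -> -1 <= r <= 1.
Proof. by case: e => //= /andP[r_ge r_le]; apply/andP; lia. Qed.

Definition syllable_word (b : syllable) : word := (true, b.1) :: a_pow b.2.

Definition nf_word (bs : seq syllable) : word := flatten [seq syllable_word b | b <- bs].

Lemma act_nf_word bs : reduced bs -> act_word (nf_word bs) (0, [::]) = (0, bs).
Proof.
elim: bs => [|[e r] bs IH] //= /[dup] red_ebs /and3P[er _ red_bs].
rewrite act_word_cat IH // act_a_pow /=; last exact: coset_rep_bound er.
have -> : 0 + r = 0 * tbase e + r by rewrite !mul0r.
by rewrite act_tpow_eq // mul_tpow_push // mul0r.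
Qed.

Lemma bs_equiv_catl u u' v : bs_equiv u u' -> bs_equiv (u ++ v) (u' ++ v).
Proof.
elim=> {u u'} [w | ? ? _ | ? ? ? _ H1 _ H2 | p x q | p q]; rewrite -?catA.
- exact: bs_refl.
- exact: bs_sym.
- exact: bs_trans H1 H2.
- exact: bs_free.
- exact: bs_rel.
Qed.

Lemma bs_equiv_catr u v v' : bs_equiv v v' -> bs_equiv (u ++ v) (u ++ v').
Proof.
elim=> {v v'} [w | ? ? _ | ? ? ? _ H1 _ H2 | p x q | p q]; rewrite ?catA.
- exact: bs_refl.
- exact: bs_sym.
- exact: bs_trans H1 H2.
- exact: bs_free.
- by rewrite -(catA _ bs_relator); apply: bs_rel.
Qed.

Lemma bs_gamma_cover n : exists s, size s = bs_gamma n /\ covers_ball n s.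
Proof. by rewrite /bs_gamma; case: ex_minnP => k /asboolP. Qed.

Lemma bs_gamma_min n s : covers_ball n s -> (bs_gamma n <= size s)%N.
Proof.
by move=> cover_s; rewrite /bs_gamma; case: ex_minnP => k _; apply; apply/asboolP; exists s.
Qed.

Lemma bs_gamma_gt0 n : (0 < bs_gamma n)%N.
Proof.
have [s [<- [_ cover_s]]] := bs_gamma_cover n.
by have [w' w's _] := cover_s [::] isT; case: s w's {cover_s}.
Qed.

Lemma bs_gamma_submul m n : (bs_gamma (m + n) <= bs_gamma m * bs_gamma n)%N.
Proof.
have [s1 [<- [s1_size s1_cover]]] := bs_gamma_cover m.
have [s2 [<- [s2_size s2_cover]]] := bs_gamma_cover n.
rewrite -(size_allpairs cat); apply: bs_gamma_min; split.
  move=> _ /allpairsP[[u v] [/= /s1_size u_le /s2_size v_le ->]].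
  by rewrite size_cat leq_add.
move=> w w_le; rewrite -(cat_take_drop m w).
have [u' u's u_eq] : exists2 u', u' \in s1 & bs_equiv (take m w) u'.
  by apply: s1_cover; rewrite size_take_min geq_minl.
have [v' v's v_eq] : exists2 v', v' \in s2 & bs_equiv (drop m w) v'.
  by apply: s2_cover; rewrite size_drop leq_subLR.
exists (u' ++ v'); first by apply/allpairsP; exists (u', v').
exact: bs_trans (bs_equiv_catl _ _ _ u_eq) (bs_equiv_catr _ _ _ v_eq).
Qed.

Lemma size_reduced_le_gamma n (S : seq (seq syllable)) : uniq S ->
  (forall bs, bs \in S -> reduced bs /\ (size (nf_word bs) <= n)%N) ->
  (size S <= bs_gamma n)%N.
Proof.
move=> S_uniq S_nf; have [s [<- [_ s_cover]]] := bs_gamma_cover n.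
rewrite -(size_map (fun bs : seq syllable => (0 : int, bs)) S).
rewrite -(size_map (act_word^~ (0, [::])) s).
apply: uniq_leq_size; first by rewrite map_inj_uniq // => ? ? [].
move=> _ /mapP[bs /S_nf[red_bs bs_le] ->].
have [w' w's w_eq] := s_cover _ bs_le.
by apply/mapP; exists w' => //; rewrite -(act_word_equiv _ _ _ _ w_eq) ?act_nf_word.
Qed.

Definition stutter (bs : seq syllable) : seq syllable :=
  if bs is (e, _) :: _ then (e, 0) :: bs else bs.

Definition long_syllables : seq syllable := [:: (false, 1); (true, 1); (true, -1)].

Fixpoint nf_family (n : nat) : seq (seq syllable) :=
  match n with
  | 0 => [:: [::]]
  | 1 => [::]
  | (m.+1 as p).+1 =>
      [seq stutter bs | bs <- nf_family p] ++
      [seq b :: bs | b <- long_syllables, bs <- nf_family m]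
  end.

Lemma nf_familySS n : nf_family n.+2 =
  [seq stutter bs | bs <- nf_family n.+1] ++
  [seq b :: bs | b <- long_syllables, bs <- nf_family n].
Proof. by []. Qed.

Lemma size_nf_family n :
  size (nf_family n.+2) = (size (nf_family n.+1) + 3 * size (nf_family n))%N.
Proof. by rewrite nf_familySS size_cat size_map size_allpairs. Qed.

Lemma reduced_cons2 e r e' r' rest : reduced [:: (e, r), (e', r') & rest] =
  [&& coset_rep e r, (r != 0) || (e' == e) & reduced ((e', r') :: rest)].
Proof. by []. Qed.

Lemma nf_familyP n bs : bs \in nf_family n -> reduced bs /\ size (nf_word bs) = n.
Proof.
elim/ltn_ind: n bs => -[|[|n]] IH bs //; first by rewrite inE => /eqP ->.
rewrite nf_familySS mem_cat => /orP[/mapP[bs' bs'_in ->] |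
  /allpairsP[[b bs'] [/= b_long bs'_in ->]]].
- have [] := IH n.+1 (ltnSn _) bs' bs'_in.
  case: bs' {bs'_in} => [// | [e r] rest] red_bs' size_bs'.
  by rewrite /stutter reduced_cons2 red_bs' !eqxx orbT andbT -size_bs'; case: (e).
- have [red_bs' size_bs'] := IH n (ltnW (ltnSn _)) bs' bs'_in.
  move: b_long; rewrite !inE => /or3P[] /eqP -> /=;
    by rewrite red_bs' andbT; split; [case: (bs') => [|[]] | rewrite -size_bs'].
Qed.

Lemma nf_family_uniq n : uniq (nf_family n).
Proof.
elim/ltn_ind: n => -[|[|n]] IH //; rewrite nf_familySS cat_uniq; apply/and3P; split.
- rewrite map_inj_uniq ?IH //.
  by move=> [|[e r] bs] [|[e' r'] bs'] //= [-> _ -> ->].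
- apply/hasPn => _ /allpairsP[[b bs] [/= b_long _ ->]].
  apply/mapP => -[[|[e r] bs'] _ //= [b_eq _]].
  by move: b_long; rewrite b_eq !inE; case: (e).
- by apply: allpairs_uniq => //; [exact: IH | move=> [b bs] [b' bs'] _ _ [-> ->]].
Qed.

Lemma size_nf_family_le_gamma n : (size (nf_family n) <= bs_gamma n)%N.
Proof.
apply: size_reduced_le_gamma (nf_family_uniq n) _ => bs /nf_familyP[red_bs ->].
by split.
Qed.

Section Lambda.
Variable R : realType.

Definition lambda : R := (1 + Num.sqrt 13) / 2.

Lemma lambda_sqr : lambda ^+ 2 = lambda + 3.
Proof.
have sqrt13 : Num.sqrt (13 : R) ^+ 2 = 13 by rewrite sqr_sqrtr.
by rewrite /lambda expr2 in sqrt13 *; nra.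
Qed.

Lemma lambda_bounds : 1 <= lambda <= 3.
Proof.
have sqrt13 : Num.sqrt (13 : R) ^+ 2 = 13 by rewrite sqr_sqrtr.
have sqrt13_ge0 : 0 <= Num.sqrt (13 : R) by [].
rewrite expr2 in sqrt13.
have sqrt13_ge1 : 1 <= Num.sqrt (13 : R) by nra.
have sqrt13_le5 : Num.sqrt (13 : R) <= 5 by nra.
by rewrite /lambda; apply/andP; split; lra.
Qed.

Lemma lambda_expn_le_nf_family n : lambda ^+ n <= (size (nf_family n.+2))%:R.
Proof.
have /andP[lambda_ge1 lambda_le3] := lambda_bounds.
elim/ltn_ind: n => -[|[|n]] IH; first by rewrite expr0 ler1n.
  by rewrite expr1 (le_trans lambda_le3) // ler_nat.
have recur : lambda ^+ n.+2 = lambda ^+ n.+1 + lambda ^+ n * 3.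
  by rewrite -[n.+2]addn2 exprD lambda_sqr mulrDr -exprSr.
rewrite recur size_nf_family natrD natrM.
have := IH n.+1 (ltnSn _); have := IH n (ltnW (ltnSn _)); lra.
Qed.

Lemma lambda_expn_le_gamma n : lambda ^+ n <= lambda ^+ 2 * (bs_gamma n)%:R.
Proof.
have /andP[lambda_ge1 _] := lambda_bounds.
have gamma_ge1 : 1 <= (bs_gamma n)%:R :> R by rewrite ler1n bs_gamma_gt0.
have lambda2_ge0 : 0 <= lambda ^+ 2 by rewrite exprn_ge0 //; lra.
case: n gamma_ge1 => [|[|n]] gamma_ge1.
- by apply: le_trans (ler_weXn2l lambda_ge1 (isT : 0 <= 2)%N) _; rewrite ler_peMr.
- by apply: le_trans (ler_weXn2l lambda_ge1 (isT : 1 <= 2)%N) _; rewrite ler_peMr.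
rewrite -[in X in X <= _]addn2 exprD mulrC ler_wpM2l //.
rewrite (le_trans (lambda_expn_le_nf_family n)) //.
by rewrite ler_nat size_nf_family_le_gamma.
Qed.

End Lambda.

Section Fekete.
Variables (R : realType) (a : nat -> R).
Hypothesis a_ge0 : forall n, 0 <= a n.
Hypothesis a_subadd : forall m n, a (m + n)%N <= a m + a n.

Lemma subadd_mulnD q k r : a (q * k + r)%N <= q%:R * a k + a r.
Proof.
elim: q => [|q IH]; first by rewrite mul0n add0n mul0r add0r.
by rewrite mulSn -addnA (le_trans (a_subadd _ _)) // mulrSr; lra.
Qed.

Lemma fekete :
  (fun n => a n / n%:R) @ \oo --> inf [set a k / k%:R | k in [set k | (0 < k)%N]].
Proof.
set E := [set _ | _ in _]; set l := inf E.
have E_inf : has_inf E.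
  split; first by exists (a 1%N / 1%:R); exists 1%N.
  by exists 0 => _ [k _ <-]; rewrite divr_ge0.
apply/cvgrPdist_le => eps eps_gt0.
have [_ [k k_gt0 <-] ak_lt] := inf_adherent (divr_gt0 eps_gt0 (ltr0Sn R 1)) E_inf.
set M := \sum_(r < k) a r.
have le_M r : (r < k)%N -> a r <= M.
  move=> lt_rk; rewrite /M (bigD1 (Ordinal lt_rk)) //= lerDl.
  by apply: sumr_ge0 => i _.
near=> n.
have n_gt0 : (0 < n)%N by near: n; exists 1%N.
have nR_gt0 : 0 < n%:R :> R by rewrite ltr0n.
have l_le : l <= a n / n%:R by apply: (ge_inf E_inf.2); exists n.
have an_le : a n / n%:R <= a k / k%:R + M / n%:R.
  have : a n <= (n %/ k)%:R * a k + M.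
    by rewrite {1}(divn_eq n k) (le_trans (subadd_mulnD _ _ _)) // lerD2l le_M // ltn_mod.
  rewrite ler_pdivrMr // mulrDl divfK ?gt_eqF // => /le_trans; apply; rewrite lerD2r.
  rewrite mulrAC -mulrA mulrC ler_wpM2l ?a_ge0 // ler_pdivlMr ?ltr0n //.
  by rewrite -natrM ler_nat leq_divM.
have M_small : M / n%:R <= eps / 2.
  rewrite ler_pdivrMr // mulrC -ler_pdivrMr ?divr_gt0 //.
  near: n; exists (Num.truncn (M / (eps / 2))).+1 => // n /= lt_n.
  by rewrite (le_trans (ltW (truncnS_gt _))) // ler_nat.
rewrite ler_norml; apply/andP; split; lra.
Unshelve. all: by end_near.
Qed.

End Fekete.

Lemma ler_cvg_ratio (R : realType) (a : nat -> R) (l L C : R) :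
  (fun n => a n / n%:R) @ \oo --> l -> (forall n, L * n%:R <= C + a n) -> L <= l.
Proof.
move=> a_cvg a_ge.
have shift_cvg : (fun n => a n.+1 / n.+1%:R) @ \oo --> l.
  by move: a_cvg; rewrite -(cvg_shiftS (fun n => a n / n%:R)).
have lower_cvg : (fun n => L - C * harmonic n) @ \oo --> L.
  rewrite -[X in _ --> X]subr0 -(mulr0 C).
  by apply: cvgB; [exact: cvg_cst | apply: cvgM; [exact: cvg_cst | exact: cvg_harmonic]].
apply: (ler_cvg_to lower_cvg shift_cvg); near=> n.
rewrite /harmonic /= ler_pdivlMr ?ltr0n // mulrBl -mulrA mulVf ?pnatr_eq0 // mulr1.
by rewrite lerBlDl.
Unshelve. all: by end_near.
Qed.

Section GrowthRate.
Variables (R : realType) (g : nat -> nat).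
Hypothesis g_gt0 : forall n, (0 < g n)%N.
Hypothesis g_submul : forall m n, (g (m + n) <= g m * g n)%N.

Definition growth_exponent : R :=
  inf [set ln ((g k)%:R : R) / k%:R | k in [set k | (0 < k)%N]].

Let gR_gt0 n : 0 < (g n)%:R :> R. Proof. by rewrite ltr0n. Qed.

Lemma cvg_log_growth : (fun n => ln ((g n)%:R : R) / n%:R) @ \oo --> growth_exponent.
Proof.
apply: fekete => [n | m n]; first by rewrite ln_ge0 // ler1n.
by rewrite -lnM ?posrE // ler_ln ?posrE ?mulr_gt0 // -natrM ler_nat.
Qed.

Lemma cvg_root_growth : (fun n => ((g n)%:R : R) `^ n%:R^-1) @ \oo --> expR growth_exponent.
Proof.
have -> : (fun n => ((g n)%:R : R) `^ n%:R^-1) = expR \o (fun n => ln ((g n)%:R : R) / n%:R).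
  by apply: funext => n /=; rewrite /powR gt_eqF // mulrC.
by apply: cvg_comp cvg_log_growth _; apply: continuous_expR.
Qed.

Lemma ler_growth_rate (x c : R) : 0 < x -> 0 < c ->
  (forall n, x ^+ n <= c * (g n)%:R) -> x <= expR growth_exponent.
Proof.
move=> x_gt0 c_gt0 x_le; rewrite -(lnK x_gt0) ler_expR.
apply: ler_cvg_ratio (ln c) cvg_log_growth _ => n.
rewrite mulr_natr -lnXn // -lnM ?posrE ?mulr_gt0 // ler_ln ?posrE ?mulr_gt0 ?exprn_gt0 ?x_le //.
Qed.

End GrowthRate.

Theorem proposition5p2 (R : realType) :
  exists L : R,
    (fun n : nat => ((bs_gamma n)%:R : R) `^ (n%:R^-1)) @ \oo --> L /\
    (1 + Num.sqrt 13) / 2 <= L.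
Proof.
exists (expR (growth_exponent R bs_gamma)); split.
  exact: cvg_root_growth _ _ bs_gamma_gt0 bs_gamma_submul.
have /andP[lambda_ge1 _] := lambda_bounds R.
change (lambda R <= expR (growth_exponent R bs_gamma)).
apply: (ler_growth_rate _ _ bs_gamma_gt0 bs_gamma_submul _ (lambda R ^+ 2)).
- lra.
- by rewrite exprn_gt0 //; lra.
- exact: lambda_expn_le_gamma.
Qed.
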